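(* Let $\mathcal G=(\mathcal V,\mathcal E)$ be a weakly connected digraph with $\alpha$ source SCCs and $\beta$ target SCCs, whose nodes are agents running the distributed protocol described in the context. Then the time-complexity of the protocol for any agent $u$ is $\mathcal O(|\mathcal V||\mathcal E|\min\{\alpha,\beta\})$.
   Context: A digraph $\mathcal G=(\mathcal V,\mathcal E)$ has edges $(u,v)$, meaning $v$ receives information from $u$. In-neighbors of $v$: $\mathcal N^-(v)=\{u:(u,v)\in\mathcal E\}$; out-neighbors of $u$: $\mathcal N^+(u)=\{v:(u,v)\in\mathcal E\}$. For a strongly connected component (SCC) $\mathcal S$, let $\mathcal O_{\mathcal S}$ be the set of edges from $\mathcal S$ to $\mathcal V\setminus\mathcal S$ and $\mathcal I_{\mathcal S}$ the set of edges from $\mathcal V\setminus\mathcal S$ into $\mathcal S$. $\mathcal S$ is a source SCC (s-SCC) if $\mathcal O_{\mathcal S}\neq\emptyset,\mathcal I_{\mathcal S}=\emptyset$; a target SCC (t-SCC) if $\mathcal O_{\mathcal S}=\emptyset,\mathcal I_{\mathcal S}\neq\emptyset$; mixed if both nonempty; isolated if both empty. Standing assumptions: each agent has a unique integer ID; each agent knows the IDs of its in- and out-neighbors; an agent knowing another agent's ID can establish a (long-range) connection to it; communication is synchronous in discrete time. The protocol (which solves the minimum cardinality augmentation problem of adding fewest edges to make the digraph strongly connected) proceeds in rounds, each consisting of the following phases, on the current digraph (original edges plus edges added so far). Phase 1 (all agents $u$): $u$ starts knowing its outgoing edges; repeatedly, $u$ sends its newly learned edges to all out-neighbors and adds all edges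 received from in-neighbors to its known set, until no new edges are learned. Then $u$ runs Tarjan's SCC algorithm on its known edges and classifies its own SCC as source, target, mixed or isolated from the known edges. If isolated, $u$ exits. If its SCC is a source SCC and $u$ has the minimum ID in it, $u$ goes to Phase 3; if target SCC and $u$ has minimum ID in it, Phase 2; otherwise $u$ waits for the next round. Phase 2 (target representative $u$): $u$ forms the set $S_u$ of the minimum-ID agents of the source SCCs it knows, sends $S_u$ by long-range communication to every agent of $S_u$, and goes to Phase 4. Phase 3 (source representative $u$): let $P_u$ be the set of target representatives that sent to $u$ in Phase 2. If some $t\in P_u$ has $|S_t|>1$, $u$ selects one such $t$ and sends $P_u$ to $t$; otherwise $u$ adds edges $(t,u)$ for all $t\in P_u$. Then $u$ waits for the next round. Phase 4 (target representative $u$): let $P_u$ be the set of source representatives $s$ that sent to $u$ in Phase 3. If $P_u=\emptyset$, wait. If some $s\in P_u$ has $|P_s|>1$, $u$ selects one such $s$ and adds edge $(u,s)$; otherwise $u$ adds edges $(u,s)$ to each proposing source representative. Then $u$ waits for the next round. Added edges become part of the digraph for subsequent rounds. Time-complexity refers to the local computation performed by agent $u$ over the whole execution. *)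

From mathcomp Require Import all_boot.
Set Implicit Arguments. Unset Strict Implicit. Unset Printing Implicit Defensive.

(* Agents are the vertices 'I_n; a digraph is a set of ordered pairs
   (u,v) meaning "v receives information from u". *)
Section Protocol.
Variable n : nat.
Notation V := 'I_n.
Notation edges := {set V * V}.

Definition erel (K : edges) : rel V := fun x y => (x, y) \in K.

Definition sccIn (K : edges) (x : V) : {set V} :=
  [set y | connect (erel K) x y && connect (erel K) y x].
Definition outIn (K : edges) (x : V) : {set V * V} :=
  [set e in K | (e.1 \in sccIn K x) && (e.2 \notin sccIn K x)].
Definition inIn (K : edges) (x : V) : {set V * V} :=
  [set e in K | (e.1 \notin sccIn K x) && (e.2 \in sccIn K x)].
Definition is_sourceIn K x := (outIn K x != set0) && (inIn K x == set0).
Definition is_targetIn K x := (outIn K x == set0) && (inIn K x != set0).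
Definition is_isolatedIn K x := (outIn K x == set0) && (inIn K x == set0).

Definition alpha (E : edges) : nat := #|[set sccIn E x | x in [set x | is_sourceIn E x]]|.
Definition beta (E : edges) : nat := #|[set sccIn E x | x in [set x | is_targetIn E x]]|.

Definition weakly_connected (E : edges) : Prop :=
  forall x y, connect (fun a b => ((a, b) \in E) || ((b, a) \in E)) x y.
Definition strongly_connected (E : edges) : Prop :=
  forall x y, connect (erel E) x y.
Definition loopless (E : edges) : Prop := forall x, (x, x) \notin E.

Variable id : V -> nat.
Definition min_id_in (S : {set V}) (x : V) := [forall y in S, id x <= id y].

(* flood F k = (known_k, new_k); known_0 u = new_0 u = outgoing edges of u;
   at step k+1, u adds what its in-neighbours sent (their new_k). *)
Fixpoint flood (F : edges) (k : nat) : (V -> edges) * (V -> edges) :=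
  match k with
  | 0 => (fun u => [set e in F | e.1 == u], fun u => [set e in F | e.1 == u])
  | k'.+1 =>
      let kn := (flood F k').1 in
      let nw := (flood F k').2 in
      let kn' := fun u => kn u :|: \bigcup_(v | (v, u) \in F) nw v in
      (kn', fun u => kn' u :\: kn u)
  end.

Definition stop (F : edges) (u : V) : nat :=
  find (fun k => (flood F k.+1).2 u == set0) (iota 0 n.+1).

Definition Kn (F : edges) (u : V) : edges := (flood F (stop F u)).1 u.

Definition outN (F : edges) (u : V) : {set V} := [set v | (u, v) \in F].
Definition inN (F : edges) (u : V) : {set V} := [set v | (v, u) \in F].

(* cost of Phase 1: per flooding iteration, one unit plus one unit per edge
   sent to each out-neighbour and per edge received from each in-neighbour;
   then Tarjan's SCC algorithm + classification: |known edges| + |known vertices|. *)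
Definition known_vertices (K : edges) (u : V) : {set V} :=
  u |: [set x | [exists y, ((x, y) \in K) || ((y, x) \in K)]].
Definition p1cost (F : edges) (u : V) : nat :=
  \sum_(k < (stop F u).+1)
     (1 + #|(flood F k).2 u| * #|outN F u|
        + \sum_(v in inN F u) #|(flood F k).2 v|)
  + (#|Kn F u| + #|known_vertices (Kn F u) u|).

Definition isolated_ag F u := is_isolatedIn (Kn F u) u.
Definition src_rep F u := is_sourceIn (Kn F u) u && min_id_in (sccIn (Kn F u) u) u.
Definition tgt_rep F u := is_targetIn (Kn F u) u && min_id_in (sccIn (Kn F u) u) u.

Definition S_set (F : edges) (t : V) : {set V} :=
  [set s | is_sourceIn (Kn F t) s && min_id_in (sccIn (Kn F t) s) s].
(* target representatives that sent to source representative s *)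
Definition P_src (F : edges) (s : V) : {set V} :=
  [set t | tgt_rep F t && (s \in S_set F t)].

(* selection oracle: sel r u A is the element selected by agent u in round r
   among the candidate set A (nondeterministic choice) *)
Variable sel : nat -> V -> {set V} -> V.

Definition fwd_cands (F : edges) (s : V) : {set V} :=
  [set t in P_src F s | 1 < #|S_set F t|].
Definition fwd (F : edges) (s : V) : bool := fwd_cands F s != set0.
(* source representatives that sent (in Phase 3) to target t *)
Definition Q_tgt (F : edges) (r : nat) (t : V) : {set V} :=
  [set s | src_rep F s && fwd F s && (sel r s (fwd_cands F s) == t)].

Definition bk_cands (F : edges) (r : nat) (t : V) : {set V} :=
  [set s in Q_tgt F r t | 1 < #|P_src F s|].

Definition added3 (F : edges) : edges :=
  \bigcup_(s | src_rep F s && ~~ fwd F s) [set (t, s) | t in P_src F s].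
Definition added4 (F : edges) (r : nat) : edges :=
  \bigcup_(t | tgt_rep F t)
     (if bk_cands F r t != set0 then [set (t, sel r t (bk_cands F r t))]
      else [set (t, s) | s in Q_tgt F r t]).

Fixpoint graph_at (E : edges) (r : nat) : edges :=
  match r with
  | 0 => E
  | r'.+1 => let F := graph_at E r' in F :|: added3 F :|: added4 F r'
  end.

Definition p2cost F u := #|Kn F u| + #|S_set F u| * #|S_set F u|.
Definition p3cost F u := 1 + 2 * #|P_src F u|.
Definition p4cost F r u := 1 + #|Q_tgt F r u|.

Definition round_cost (F : edges) (r : nat) (u : V) : nat :=
  p1cost F u
  + (if tgt_rep F u then p2cost F u + p4cost F r u else 0)
  + (if src_rep F u then p3cost F u else 0).

Definition exited_before (E : edges) (r : nat) (u : V) : bool :=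
  [exists r' : 'I_r, isolated_ag (graph_at E r') u].

Definition total_cost (E : edges) (N : nat) (u : V) : nat :=
  \sum_(r < N) (if exited_before E r u then 0 else round_cost (graph_at E r) r u).

End Protocol.

From mathcomp Require Import all_boot zify.
Set Implicit Arguments. Unset Strict Implicit. Unset Printing Implicit Defensive.

(* Phase 1 floods every edge forward, so when it stops agent u knows exactly the edges
   whose tail reaches u.  These contain all edges incident to the SCC of u or to an SCC
   upstream of u, so each agent classifies its own SCC, and the source SCCs above it,
   exactly as the whole digraph does: the protocol acts on the true source and target
   representatives.
   In a round, if some source representative s does not forward, then s is the only
   source above every target representative, everything lies below s, and the edges
   (t, s) make the digraph strongly connected.  The same happens if every source
   representative has a single target.  Otherwise some Phase-4 edge merges two target
   SCCs, so beta drops, and every source representative receiving an edge shares its new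
   source SCC with another one receiving an edge, so 2 alpha drops by at least the number
   of added edges.  Hence the digraph is strongly connected, and every agent has exited,
   after min(alpha, beta) rounds, the current digraph keeps O(|E|) edges, and one round
   costs an agent O(|V| |E|). *)

Lemma card_imset_paired (T U : finType) (f : T -> U) (P : pred T) (A : {set T}) :
  (forall a, a \in A -> P a -> exists2 a', a' \in A & (a' != a) && (f a' == f a)) ->
  2 * #|f @: [set a in A | P a]| <= #|A|.
Proof.
move=> partner; set Y := f @: _.
have fibre2 y : y \in Y -> 2 <= #|[set a in A | f a == y]|.
  case/imsetP=> a; rewrite inE => /andP [aA Pa] ->.
  have [a' a'A /andP [a'a /eqP fa']] := partner a aA Pa.
  have := subset_leq_card (_ : [set a'; a] \subset [set b in A | f b == f a]).
  rewrite cards2 a'a; apply.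
  by apply/subsetP=> b; rewrite !inE => /orP [] /eqP ->; rewrite ?a'A ?aA ?fa' eqxx.
have fibres : \sum_(y in Y) #|[set a in A | f a == y]| = #|[set a in A | f a \in Y]|.
  rewrite -sum1_card (partition_big f (mem Y)) => [|a]; last by rewrite inE => /andP [].
  apply: eq_bigr => y yY; rewrite -sum1_card; apply: eq_bigl => a.
  by rewrite !inE; case: eqP => [->|]; rewrite ?yY ?andbT ?andbF.
rewrite mulnC -sum_nat_const; apply: leq_trans (_ : _ <= #|[set a in A | f a \in Y]|) _.
  by rewrite -fibres; apply: leq_sum.
by apply: subset_leq_card; apply/subsetP => a; rewrite inE => /andP [].
Qed.

Lemma card_imset_lt (T U : finType) (f : T -> U) (P : pred T) (B : {set T}) b :
  b \in B -> (~~ P b \/ exists2 b', b' \in B & (b' != b) && (f b' == f b)) ->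
  #|f @: [set a in B | P a]| < #|B|.
Proof.
move=> bB b_lost.
have sub : f @: [set a in B | P a] \subset f @: (B :\ b).
  apply/subsetP => y /imsetP [a]; rewrite inE => /andP [aB Pa] ->.
  have [ab|ab] := eqVneq a b; last by apply/imsetP; exists a; rewrite // !inE ab aB.
  case: b_lost => [|[b' b'B /andP [b'b /eqP fb']]]; first by rewrite -ab Pa.
  by apply/imsetP; exists b'; rewrite ?fb' ?ab // !inE b'b b'B.
apply: leq_ltn_trans (subset_leq_card sub) _.
apply: leq_ltn_trans (leq_imset_card _ _) _.
by rewrite (cardsD1 b B) bB.
Qed.

(** * Reachability and strongly connected components *)

Section Reachability.
Variable n : nat.
Implicit Types (G : {set 'I_n * 'I_n}) (x y z : 'I_n).

Definition reach G x y := connect (erel G) x y.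

Lemma reach_refl G x : reach G x x.
Proof. exact: connect0. Qed.

Lemma reach_trans G x y z : reach G x y -> reach G y z -> reach G x z.
Proof. exact: connect_trans. Qed.

Lemma reach_edge G x y : (x, y) \in G -> reach G x y.
Proof. exact: connect1. Qed.

Lemma reach_subset G G' x y : G \subset G' -> reach G x y -> reach G' x y.
Proof.
move=> sub; apply: connect_sub => a b ab; apply: connect1.
by rewrite /erel (subsetP sub).
Qed.

Lemma strongly_connectedP G :
  reflect (strongly_connected G) [forall x, forall y, reach G x y].
Proof.
apply: (iffP forallP) => [h x y | h x]; first exact: (forallP (h x) y).
by apply/forallP => y; apply: h.
Qed.

Lemma sccP G x y : reflect (reach G x y /\ reach G y x) (y \in sccIn G x).
Proof. by rewrite inE; apply: andP. Qed.

Lemma scc_refl G x : x \in sccIn G x.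
Proof. by apply/sccP; split; apply: reach_refl. Qed.

Lemma scc_eq G x y : y \in sccIn G x -> sccIn G y = sccIn G x.
Proof.
move=> /sccP [xy yx]; apply/setP => z; apply/sccP/sccP => -[h1 h2]; split.
- exact: reach_trans xy h1.
- exact: reach_trans h2 yx.
- exact: reach_trans yx h1.
- exact: reach_trans h2 xy.
Qed.

Lemma sourceIn_scc G x y : sccIn G x = sccIn G y -> is_sourceIn G x = is_sourceIn G y.
Proof. by rewrite /is_sourceIn /outIn /inIn => ->. Qed.

Lemma targetIn_scc G x y : sccIn G x = sccIn G y -> is_targetIn G x = is_targetIn G y.
Proof. by rewrite /is_targetIn /outIn /inIn => ->. Qed.

Lemma reach_closed_pred G (C : {set 'I_n}) x y :
  (forall a b, (a, b) \in G -> b \in C -> a \in C) -> reach G y x -> x \in C -> y \in C.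
Proof.
move=> closed /connectP [p + ->]; elim: p y => [|z p IH] y //= /andP [yz zp] xC.
exact: closed _ _ yz (IH _ zp xC).
Qed.

Lemma reach_closed_succ G (C : {set 'I_n}) x y :
  (forall a b, (a, b) \in G -> a \in C -> b \in C) -> reach G x y -> x \in C -> y \in C.
Proof.
move=> closed /connectP [p + ->]; elim: p x => [|z p IH] x //= /andP [xz zp] xC.
exact: IH _ zp (closed _ _ xz xC).
Qed.

Lemma scc_reach_noin G x y : inIn G x == set0 -> reach G y x -> y \in sccIn G x.
Proof.
move=> /eqP noin yx; apply: reach_closed_pred yx (scc_refl _ _) => a b ab bC.
apply: contraT => aC.
have : (a, b) \in inIn G x by rewrite inE ab /= aC bC.
by rewrite noin inE.
Qed.

Lemma scc_reach_noout G x y : outIn G x == set0 -> reach G x y -> y \in sccIn G x.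
Proof.
move=> /eqP noout xy; apply: reach_closed_succ xy (scc_refl _ _) => a b ab aC.
apply: contraT => bC.
have : (a, b) \in outIn G x by rewrite inE ab /= aC bC.
by rewrite noout inE.
Qed.

Lemma weakly_connected_closed G (C : {set 'I_n}) x :
  weakly_connected G -> x \in C ->
  (forall a b, (a, b) \in G -> a \in C -> b \in C) ->
  (forall a b, (a, b) \in G -> b \in C -> a \in C) -> forall y, y \in C.
Proof.
move=> wc xC succ pred y; move: (wc x y) => /connectP [p + ->].
elim: p x xC => [|z p IH] x xC //= /andP [/orP [] e zp]; apply: IH zp.
  exact: succ e xC.
exact: pred e xC.
Qed.

Lemma isolated_strongly_connected G x :
  weakly_connected G -> is_isolatedIn G x -> strongly_connected G.
Proof.
move=> wc /andP [noout noin].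
have inC y : y \in sccIn G x.
  apply: (weakly_connected_closed wc (scc_refl G x)) => a b ab aC.
  - rewrite -(scc_eq aC); apply: scc_reach_noout (reach_edge ab).
    by rewrite /outIn (scc_eq aC).
  - rewrite -(scc_eq aC); apply: scc_reach_noin (reach_edge ab).
    by rewrite /inIn (scc_eq aC).
move=> y z; have /sccP [_ yx] := inC y; have /sccP [xz _] := inC z.
exact: reach_trans yx xz.
Qed.

Lemma strongly_connected_isolated G x : strongly_connected G -> is_isolatedIn G x.
Proof.
move=> sc; have sccT : sccIn G x = setT by apply/setP => y; rewrite !inE !sc.
rewrite /is_isolatedIn /outIn /inIn sccT.
by apply/andP; split; apply/eqP/setP => e; rewrite !inE andbF.
Qed.

Lemma source_above G x : weakly_connected G -> ~ strongly_connected G ->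
  exists2 y, is_sourceIn G y & reach G y x.
Proof.
move=> wc nsc.
have [y yx ymin] :=
  arg_minnP (P := fun z => reach G z x) (fun z => #|[set w | reach G w z]|) (reach_refl G x).
exists y => //.
have noin : inIn G y == set0.
  apply/eqP/setP => -[a b]; rewrite in_set0 in_set /=.
  apply/negbTE/negP => /andP [ab /andP [aC /sccP [_ by_]]].
  have ay : reach G a y := reach_trans (reach_edge ab) by_.
  have := ymin a (reach_trans ay yx); apply/negP; rewrite -ltnNge.
  apply: proper_card; rewrite properE; apply/andP; split.
    by apply/subsetP => z; rewrite !inE => /reach_trans; apply.
  apply/subsetPn; exists y; rewrite !inE ?reach_refl //.
  by apply: contra aC => ya; apply/sccP.
rewrite /is_sourceIn noin andbT; apply/negP => noout.
by apply: nsc; apply: (isolated_strongly_connected (x := y)); rewrite // /is_isolatedIn noout.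
Qed.

Lemma target_below G x : weakly_connected G -> ~ strongly_connected G ->
  exists2 y, is_targetIn G y & reach G x y.
Proof.
move=> wc nsc.
have [y xy ymin] := arg_minnP (fun z => #|[set w | reach G z w]|) (reach_refl G x).
exists y => //.
have noout : outIn G y == set0.
  apply/eqP/setP => -[a b]; rewrite in_set0 in_set /=.
  apply/negbTE/negP => /andP [ab /andP [/sccP [ya _] bC]].
  have yb : reach G y b := reach_trans ya (reach_edge ab).
  have := ymin b (reach_trans xy yb); apply/negP; rewrite -ltnNge.
  apply: proper_card; rewrite properE; apply/andP; split.
    by apply/subsetP => z; rewrite !inE; apply: reach_trans.
  apply/subsetPn; exists y; rewrite !inE ?reach_refl //.
  by apply: contra bC => by_; apply/sccP.
rewrite /is_targetIn noout /=; apply/negP => noin.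
by apply: nsc; apply: (isolated_strongly_connected (x := y)); rewrite // /is_isolatedIn noout.
Qed.

End Reachability.


(** * Phase 1 *)

Section Flooding.
Variable n : nat.
Implicit Types (G : {set 'I_n * 'I_n}) (a u v w : 'I_n).

Definition known G k u := (flood G k).1 u.
Definition fresh G k u := (flood G k).2 u.

Lemma known0 G u : known G 0 u = [set e in G | e.1 == u].
Proof. by []. Qed.

Lemma fresh0 G u : fresh G 0 u = known G 0 u.
Proof. by []. Qed.

Lemma knownS G k u : known G k.+1 u = known G k u :|: \bigcup_(v | (v, u) \in G) fresh G k v.
Proof. by []. Qed.

Lemma freshS G k u : fresh G k.+1 u = known G k.+1 u :\: known G k u.
Proof. by []. Qed.

Lemma fresh_subset G k u : fresh G k u \subset known G k u.
Proof. by case: k => [|k]; rewrite ?fresh0 // freshS subsetDl. Qed.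

Lemma known_subsetS G k u : known G k u \subset known G k.+1 u.
Proof. by rewrite knownS subsetUl. Qed.

Definition reach_within G k a u :=
  exists p, [/\ path (erel G) a p, last a p = u & size p <= k].

Lemma reach_within0 G a u : reach_within G 0 a u <-> a = u.
Proof. by split=> [[[|b p] []] //|->]; exists [::]. Qed.

Lemma reach_withinS G k a u : reach_within G k a u -> reach_within G k.+1 a u.
Proof. by case=> p [ap pu size_p]; exists p; split => //; apply: leqW. Qed.

Lemma reach_within_rcons G k a v u :
  reach_within G k a v -> (v, u) \in G -> reach_within G k.+1 a u.
Proof.
case=> p [ap pv size_p] vu; exists (rcons p u).
by rewrite rcons_path last_rcons size_rcons ltnS ap pv.
Qed.

Lemma reach_within_cons G k a b u :
  (a, b) \in G -> reach_within G k b u -> reach_within G k.+1 a u.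
Proof. by move=> ab [p [bp pu size_p]]; exists (b :: p); split => //=; apply/andP. Qed.

Lemma reach_within_reach G k a u : reach_within G k a u -> reach G a u.
Proof. by case=> p [ap pu _]; apply/connectP; exists p. Qed.

Lemma reach_reach_within G a u : reach G a u -> reach_within G n a u.
Proof.
move=> /connectP [p ap ->]; have [q aq uniq_q _] := shortenP ap.
exists q; split => //; apply: ltnW; have := max_card (mem (a :: q)).
by rewrite (card_uniqP uniq_q) card_ord.
Qed.

Lemma known_sound G k u e : e \in known G k u -> e \in G /\ reach_within G k e.1 u.
Proof.
elim: k u => [|k IH] u.
  by rewrite known0 inE => /andP [-> /eqP ->]; split => //; apply/reach_within0.
rewrite knownS inE => /orP [/IH [eG eu] | /bigcupP [v vu]].
  by split => //; apply: reach_withinS.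
move=> /(subsetP (fresh_subset _ _ _)) /IH [eG ev].
by split => //; apply: reach_within_rcons vu.
Qed.

Lemma known_complete G k u e : e \in G -> reach_within G k e.1 u -> e \in known G k u.
Proof.
elim: k u => [|k IH] u eG; first by move/reach_within0 => eu; rewrite known0 inE eG eu /=.
case: (boolP (e \in known G k u)) => [old _|new [p [ep pu size_p]]].
  exact: subsetP (known_subsetS G k u) _ old.
have {}size_p : size p = k.+1.
  apply/eqP; rewrite eqn_leq size_p ltnNge; apply: contra new => size_p'.
  by apply: IH => //; exists p.
case/lastP: p ep pu size_p => [|p w] //.
rewrite rcons_path last_rcons size_rcons => /andP [ep vu] wu [size_p]; subst w.
set v := last e.1 p in vu.
have ev : reach_within G k e.1 v by exists p; rewrite size_p.
rewrite knownS inE; apply/orP; right; apply/bigcupP; exists v => //.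
case: k IH new size_p ev => [|k] IH new size_p ev; first by rewrite fresh0; apply: IH.
rewrite freshS inE IH // andbT; apply: contra new => /known_sound [_ ev'].
by apply: IH => //; apply: reach_within_rcons ev' vu.
Qed.

Lemma known_subset G k u : known G k u \subset G.
Proof. by apply/subsetP => e /known_sound []. Qed.

Lemma sum_card_fresh G K u : \sum_(k < K.+1) #|fresh G k u| = #|known G K u|.
Proof.
elim: K => [|K IH]; first by rewrite big_ord_recr big_ord0.
rewrite big_ord_recr /= IH freshS cardsD (setIidPr (known_subsetS _ _ _)).
by rewrite subnKC // subset_leq_card // known_subsetS.
Qed.

Lemma stop_le G u : stop G u <= n.+1.
Proof. by rewrite /stop; apply: leq_trans (find_size _ _) _; rewrite size_iota. Qed.

Lemma reach_within_stop G K u : fresh G K.+1 u == set0 ->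
  forall a, reach_within G K.+1 a u -> reach_within G K a u.
Proof.
move=> /eqP no_fresh a [[|b p] [ap pu size_p]]; first by exists [::]; split.
have ab : (a, b) \in known G K.+1 u.
  by apply: known_complete (andP ap).1 _; exists (b :: p).
have : (a, b) \in known G K u.
  apply: contraT => abK.
  by have := in_set0 (a, b); rewrite -no_fresh freshS inE abK ab.
by case/known_sound.
Qed.

Lemma reach_within_closed G K u :
  (forall a, reach_within G K.+1 a u -> reach_within G K a u) ->
  forall a, reach G a u -> reach_within G K a u.
Proof.
move=> closed a /connectP [p]; elim: p a => [|b p IH] a /=; first by move=> _ ->; exists [::].
by case/andP=> ab bp pu; apply: closed; apply: reach_within_cons ab (IH _ bp pu).
Qed.

Lemma Kn_char G u : Kn G u = [set e in G | reach G e.1 u].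
Proof.
apply/setP => e; rewrite inE; apply/idP/andP => [/known_sound [eG eu] | [eG eu]].
  by split=> //; apply: reach_within_reach eu.
apply: known_complete eG _; rewrite /stop; set stable := (fun k => _).
have [has_stable|] := boolP (has stable (iota 0 n.+1)); last first.
  by move/hasNfind => ->; rewrite size_iota; apply/reach_withinS/reach_reach_within.
apply/reach_within_closed => //; apply: reach_within_stop.
move: (nth_find 0 has_stable); rewrite nth_iota ?add0n //.
by move: has_stable; rewrite has_find size_iota.
Qed.

End Flooding.

Section LocalView.
Variable n : nat.
Implicit Types (G : {set 'I_n * 'I_n}) (x y z s t u : 'I_n).

Lemma Kn_subset G u : Kn G u \subset G.
Proof. by rewrite Kn_char; apply/subsetP => e; rewrite inE => /andP []. Qed.

Lemma reach_Kn G u y z : reach G y u -> reach (Kn G u) z y = reach G z y.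
Proof.
move=> yu; apply/idP/idP; first exact: reach_subset (Kn_subset G u).
move=> /connectP [p]; elim: p z => [|b p IH] z /=; first by move=> _ ->; rewrite reach_refl.
case/andP=> zb bp py; have zbG : (z, b) \in G := zb.
apply: (@reach_trans _ _ _ b); last exact: IH.
apply: reach_edge; rewrite Kn_char inE zbG /=.
by apply: reach_trans (reach_edge zbG) (reach_trans _ yu); apply/connectP; exists p.
Qed.

Lemma sccIn_Kn G u x : reach G x u -> sccIn (Kn G u) x = sccIn G x.
Proof.
move=> xu; apply/setP => y; apply/sccP/sccP => -[xy yx]; split;
  try exact: reach_subset (Kn_subset G u) _.
- by rewrite reach_Kn // (reach_trans yx xu).
- by rewrite reach_Kn.
Qed.

Lemma outIn_Kn G u x : reach G x u -> outIn (Kn G u) x = outIn G x.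
Proof.
move=> xu; rewrite /outIn sccIn_Kn //; apply/setP => e; rewrite !inE Kn_char inE.
apply/idP/idP => [/and3P [/andP [-> _] -> ->] // | /and3P [eG e1C e2]].
by rewrite eG e1C e2 /= andbT; case/andP: e1C => _ /reach_trans; apply.
Qed.

Lemma inIn_Kn G u x : reach G x u -> inIn (Kn G u) x = inIn G x.
Proof.
move=> xu; rewrite /inIn sccIn_Kn //; apply/setP => e; rewrite !inE Kn_char inE.
apply/idP/idP => [/and3P [/andP [-> _] -> ->] // | /and3P [eG e1 e2C]].
rewrite eG e1 e2C /= andbT; case/andP: e2C => _ /reach_trans ex.
by apply: reach_trans (ex _ xu); apply: reach_edge; rewrite -surjective_pairing.
Qed.

Lemma sourceIn_Kn G u x : reach G x u -> is_sourceIn (Kn G u) x = is_sourceIn G x.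
Proof. by move=> xu; rewrite /is_sourceIn outIn_Kn ?inIn_Kn. Qed.

Lemma targetIn_Kn G u x : reach G x u -> is_targetIn (Kn G u) x = is_targetIn G x.
Proof. by move=> xu; rewrite /is_targetIn outIn_Kn ?inIn_Kn. Qed.

Lemma isolatedIn_Kn G u x : reach G x u -> is_isolatedIn (Kn G u) x = is_isolatedIn G x.
Proof. by move=> xu; rewrite /is_isolatedIn outIn_Kn ?inIn_Kn. Qed.

(* An SCC not upstream of u has no known out-edge, so u never takes it for a source. *)
Lemma sourceIn_Kn_reach G u x : is_sourceIn (Kn G u) x -> reach G x u.
Proof.
apply: contraTT => xu; rewrite /is_sourceIn negb_and negbK; apply/orP; left.
apply/eqP/setP => e; rewrite !inE Kn_char inE; apply/negP => /and3P [/andP [_ e1u] /andP [xe1 _] _].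
move/negP: xu; apply; apply: reach_trans e1u.
by apply: reach_subset xe1; rewrite -Kn_char Kn_subset.
Qed.

Variable id : 'I_n -> nat.

Definition source_rep G x := is_sourceIn G x && min_id_in id (sccIn G x) x.
Definition target_rep G x := is_targetIn G x && min_id_in id (sccIn G x) x.

Lemma src_rep_global G u : src_rep id G u = source_rep G u.
Proof. by rewrite /src_rep /source_rep sourceIn_Kn ?sccIn_Kn ?reach_refl. Qed.

Lemma tgt_rep_global G u : tgt_rep id G u = target_rep G u.
Proof. by rewrite /tgt_rep /target_rep targetIn_Kn ?sccIn_Kn ?reach_refl. Qed.

Lemma isolated_ag_global G u : isolated_ag G u = is_isolatedIn G u.
Proof. by rewrite /isolated_ag isolatedIn_Kn ?reach_refl. Qed.

Lemma S_set_global G t : S_set id G t = [set s | source_rep G s && reach G s t].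
Proof.
apply/setP => s; rewrite !inE.
have [st|st] := boolP (reach G s t); first by rewrite /source_rep sourceIn_Kn ?sccIn_Kn ?andbT.
by rewrite andbF; apply/negbTE; apply: contra st => /andP [/sourceIn_Kn_reach].
Qed.

Lemma P_src_global G s : P_src id G s = [set t | target_rep G t && source_rep G s && reach G s t].
Proof. by apply/setP => t; rewrite {1}inE tgt_rep_global S_set_global !inE andbA. Qed.

End LocalView.

Section Representatives.
Variable n : nat.
Implicit Types (G : {set 'I_n * 'I_n}) (x y r : 'I_n).
Variable id : 'I_n -> nat.
Hypothesis id_inj : injective id.

Lemma scc_rep G x : exists2 r, r \in sccIn G x & min_id_in id (sccIn G r) r.
Proof.
have [r rx rmin] := arg_minnP id (scc_refl G x).
by exists r; rewrite // (scc_eq rx); apply/forall_inP.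
Qed.

Lemma scc_rep_uniq G r1 r2 : min_id_in id (sccIn G r1) r1 -> min_id_in id (sccIn G r2) r2 ->
  r1 \in sccIn G r2 -> r1 = r2.
Proof.
move=> + /forall_inP min2 r12; rewrite (scc_eq r12) => /forall_inP min1.
by apply: id_inj; apply/eqP; rewrite eqn_leq min1 ?min2 ?scc_refl.
Qed.

Definition source_reps G := [set x | source_rep id G x].
Definition target_reps G := [set x | target_rep id G x].

Lemma card_scc_classes G (P : pred 'I_n) :
  (forall x y, sccIn G x = sccIn G y -> P x = P y) ->
  #|[set sccIn G x | x in [set x | P x]]| = #|[set x | P x && min_id_in id (sccIn G x) x]|.
Proof.
move=> P_scc; rewrite -(card_in_imset (f := sccIn G)); last first.
  move=> r1 r2; rewrite !inE => /andP [_ min1] /andP [_ min2] r12.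
  by apply: scc_rep_uniq min1 min2 _; rewrite -r12 scc_refl.
congr #|pred_of_set _|; apply/setP => C; apply/imsetP/imsetP => -[x]; rewrite inE.
  move=> Px ->; have [r /scc_eq rx rmin] := scc_rep G x.
  by exists r; rewrite ?inE ?rmin ?andbT ?(P_scc _ _ rx) ?rx.
by case/andP => Px _ ->; exists x; rewrite ?inE.
Qed.

Lemma alpha_reps G : alpha G = #|source_reps G|.
Proof. by rewrite /alpha card_scc_classes //; apply: sourceIn_scc. Qed.

Lemma beta_reps G : beta G = #|target_reps G|.
Proof. by rewrite /beta card_scc_classes //; apply: targetIn_scc. Qed.

Lemma alpha_le G : alpha G <= n.
Proof. by rewrite alpha_reps; apply: leq_trans (max_card _) _; rewrite card_ord. Qed.

Section NotStronglyConnected.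
Variable G : {set 'I_n * 'I_n}.
Hypothesis wc : weakly_connected G.
Hypothesis nsc : ~ strongly_connected G.

Lemma source_rep_above x : exists2 r, source_rep id G r & reach G r x.
Proof.
have [y ys yx] := source_above x wc nsc; have [r ry rmin] := scc_rep G y.
exists r; first by rewrite /source_rep rmin (sourceIn_scc (scc_eq ry)) ys.
by case/sccP: ry => _ ry; apply: reach_trans ry yx.
Qed.

Lemma target_rep_below x : exists2 r, target_rep id G r & reach G x r.
Proof.
have [y yt xy] := target_below x wc nsc; have [r ry rmin] := scc_rep G y.
exists r; first by rewrite /target_rep rmin (targetIn_scc (scc_eq ry)) yt.
by case/sccP: ry => yr _; apply: reach_trans xy yr.
Qed.

Lemma n_gt0 : 0 < n.
Proof. by case: (posnP n) => // n0; case: nsc => x; move: (ltn_ord x); rewrite {2}n0. Qed.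

Lemma alpha_gt0 : 0 < alpha G.
Proof.
have [r rs _] := source_rep_above (Ordinal n_gt0).
by rewrite alpha_reps card_gt0; apply/set0Pn; exists r; rewrite inE.
Qed.

Lemma beta_gt0 : 0 < beta G.
Proof.
have [r rt _] := target_rep_below (Ordinal n_gt0).
by rewrite beta_reps card_gt0; apply/set0Pn; exists r; rewrite inE.
Qed.

Lemma n_le_2card : n <= 2 * #|G|.
Proof.
have cover : [set: 'I_n] \subset [set e.1 | e in G] :|: [set e.2 | e in G].
  apply/subsetP => x _.
  have [y yx] : exists y, y != x.
    case: (pickP (predC1 x)) => [y | only_x]; first by exists y.
    by case: nsc => a b; move: (only_x a) (only_x b) => /= /negbFE/eqP -> /negbFE/eqP ->.
  move: (wc x y) => /connectP [[|z p] /= + yl]; first by rewrite yl eqxx in yx.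
  case/andP => /orP [] e _; rewrite !inE; apply/orP; [left | right].
    by apply/imsetP; exists (x, z).
  by apply/imsetP; exists (z, x).
have := subset_leq_card cover; rewrite cardsT card_ord => /leq_trans; apply.
apply: leq_trans (leq_card_setU _ _) _.
by rewrite mul2n -addnn leq_add ?leq_imset_card.
Qed.

End NotStronglyConnected.
End Representatives.

(** * One round of the protocol *)

Section Round.
Variable n : nat.
Implicit Types (F : {set 'I_n * 'I_n}) (x y s t : 'I_n).
Variable id : 'I_n -> nat.
Hypothesis id_inj : injective id.
Variable sel : nat -> 'I_n -> {set 'I_n} -> 'I_n.
Hypothesis sel_in : forall r u (A : {set 'I_n}), A != set0 -> sel r u A \in A.

Local Notation source_rep := (source_rep id).
Local Notation target_rep := (target_rep id).

Lemma added3_inv F e : e \in added3 id F ->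
  [/\ source_rep F e.2, ~~ fwd id F e.2 & e.1 \in P_src id F e.2].
Proof. by case/bigcupP => s /andP [s_rep s_fwd] /imsetP [t tP ->]; rewrite -src_rep_global. Qed.

Lemma mem_added3 F s t : source_rep F s -> ~~ fwd id F s -> t \in P_src id F s ->
  (t, s) \in added3 id F.
Proof.
move=> s_rep s_fwd tP; apply/bigcupP; exists s; first by rewrite src_rep_global s_rep.
by apply/imsetP; exists t.
Qed.

Lemma mem_Q_tgt F r t s : s \in Q_tgt id sel F r t =
  [&& source_rep F s, fwd id F s & sel r s (fwd_cands id F s) == t].
Proof. by rewrite inE src_rep_global andbA. Qed.

Lemma added4_inv F r e : e \in added4 id sel F r ->
  target_rep F e.1 /\ e.2 \in Q_tgt id sel F r e.1.
Proof.
case/bigcupP => t; rewrite -tgt_rep_global; case: ifP => [bk|_] t_rep.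
  rewrite inE => /eqP -> /=; split => //.
  by have := sel_in r t bk; rewrite inE => /andP [].
by case/imsetP => s sQ ->.
Qed.

Lemma mem_added4_sel F r t : target_rep F t -> bk_cands id sel F r t != set0 ->
  (t, sel r t (bk_cands id sel F r t)) \in added4 id sel F r.
Proof.
move=> t_rep bk; apply/bigcupP; exists t; first by rewrite tgt_rep_global.
by rewrite bk inE.
Qed.

Lemma mem_added4_Q F r t s : target_rep F t -> bk_cands id sel F r t == set0 ->
  s \in Q_tgt id sel F r t -> (t, s) \in added4 id sel F r.
Proof.
move=> t_rep bk sQ; apply/bigcupP; exists t; first by rewrite tgt_rep_global.
by rewrite bk; apply/imsetP; exists s.
Qed.

(* Each added Phase-3 edge (t, s) is determined by t, since S_t = {s}. *)
Lemma card_added3 F : #|added3 id F| <= n.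
Proof.
have S_single e : e \in added3 id F -> e.2 \in S_set id F e.1 /\ #|S_set id F e.1| <= 1.
  case/added3_inv => _ s_fwd tP; split; first by move: tP; rewrite inE => /andP [].
  by rewrite leqNgt; apply: contra s_fwd => S_big; apply/set0Pn; exists e.1; rewrite inE tP.
rewrite -(card_in_imset (f := fst)); last first.
  move=> [t1 s1] [t2 s2] /S_single [s1S S1] /S_single [s2S _] /= t12; subst t2.
  by congr (_, _); apply: (card_le1_eqP S1).
by apply: leq_trans (max_card _) _; rewrite card_ord.
Qed.

(* Each added Phase-4 edge (t, s) is determined by s, since s proposed to t only. *)
Lemma card_added4 F r : #|added4 id sel F r| <= n.
Proof.
rewrite -(card_in_imset (f := snd)); last first.
  move=> [t1 s1] [t2 s2] /added4_inv [_ s1Q] /added4_inv [_ s2Q] /= s12; subst s2.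
  by move: s1Q s2Q; rewrite /= !mem_Q_tgt => /and3P [_ _ /eqP <-] /and3P [_ _ /eqP <-].
by apply: leq_trans (max_card _) _; rewrite card_ord.
Qed.

Definition next_graph F r := F :|: added3 id F :|: added4 id sel F r.

Lemma next_graph_subset F r : F \subset next_graph F r.
Proof. by rewrite /next_graph -setUA subsetUl. Qed.

Lemma card_next_graph F r : #|next_graph F r| <= #|F| + 2 * n.
Proof.
apply: leq_trans (leq_card_setU _ _) _; rewrite mul2n -addnn addnA leq_add ?card_added4 //.
by apply: leq_trans (leq_card_setU _ _) _; rewrite leq_add2l card_added3.
Qed.

Lemma weakly_connected_next F r : weakly_connected F -> weakly_connected (next_graph F r).
Proof.
move=> wc x y; apply: connect_sub (wc x y) => a b ab; apply: connect1.
by case/orP: ab => ab; apply/orP; [left | right]; apply: (subsetP (next_graph_subset F r)).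
Qed.

Lemma strongly_connected_next F r : strongly_connected F -> strongly_connected (next_graph F r).
Proof. by move=> sc x y; apply: reach_subset (next_graph_subset F r) (sc x y). Qed.

Section OneRound.
Variables (F : {set 'I_n * 'I_n}) (r : nat).
Hypothesis wc : weakly_connected F.
Hypothesis nsc : ~ strongly_connected F.

Local Notation F' := (next_graph F r).
Local Notation added := (added4 id sel F r).
Local Notation sigma s := (sel r s (fwd_cands id F s)).

Lemma reach_next x y : reach F x y -> reach F' x y.
Proof. exact: reach_subset (next_graph_subset F r). Qed.

(* A target representative below s0 has S_t = {s0}: the vertices below s0 are then also
   closed under predecessors, hence everything is below s0. *)
Lemma reach_unforwarded s0 y : source_rep F s0 -> ~~ fwd id F s0 -> reach F s0 y.
Proof.
move=> s0_rep s0_fwd; have : y \in [set y | reach F s0 y]; last by rewrite inE.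
apply: (weakly_connected_closed wc (x := s0)); first by rewrite inE reach_refl.
  by move=> a b ab; rewrite !inE => /reach_trans; apply; apply: reach_edge.
move=> a b ab; rewrite !inE => s0b.
have [s s_rep sa] := source_rep_above id wc nsc a.
have [t t_rep bt] := target_rep_below id wc nsc b.
have tP : t \in P_src id F s0 by rewrite P_src_global inE t_rep s0_rep (reach_trans s0b bt).
have S_single : #|S_set id F t| <= 1.
  by rewrite leqNgt; apply: contra s0_fwd => S_big; apply/set0Pn; exists t; rewrite inE tP.
have sS : s \in S_set id F t.
  by rewrite S_set_global inE s_rep (reach_trans sa (reach_trans (reach_edge ab) bt)).
have s0S : s0 \in S_set id F t by rewrite S_set_global inE s0_rep (reach_trans s0b bt).
by rewrite (card_le1_eqP S_single _ _ sS s0S).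
Qed.

Lemma unforwarded_strongly_connected s0 :
  source_rep F s0 -> ~~ fwd id F s0 -> strongly_connected F'.
Proof.
move=> s0_rep s0_fwd x y; have [t t_rep xt] := target_rep_below id wc nsc x.
have tP : t \in P_src id F s0 by rewrite P_src_global inE t_rep s0_rep reach_unforwarded.
have ts0 : (t, s0) \in F' by rewrite !inE (mem_added3 s0_rep s0_fwd tP) orbT.
apply: reach_trans (reach_next xt) (reach_trans (reach_edge ts0) _).
by apply/reach_next/reach_unforwarded.
Qed.

Lemma next_source_rep x : is_sourceIn F' x ->
  exists2 s, s \in source_reps id F & is_sourceIn F' s && (sccIn F' s == sccIn F' x).
Proof.
move=> x_src; have [s s_rep sx] := source_rep_above id wc nsc x.
have /scc_eq sC : s \in sccIn F' x by apply: scc_reach_noin (reach_next sx); case/andP: x_src.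
by exists s; rewrite ?inE // sC (sourceIn_scc sC) x_src eqxx.
Qed.

Lemma next_target_rep x : is_targetIn F' x ->
  exists2 t, t \in target_reps id F & is_targetIn F' t && (sccIn F' t == sccIn F' x).
Proof.
move=> x_tgt; have [t t_rep xt] := target_rep_below id wc nsc x.
have /scc_eq tC : t \in sccIn F' x by apply: scc_reach_noout (reach_next xt); case/andP: x_tgt.
by exists t; rewrite ?inE // tC (targetIn_scc tC) x_tgt eqxx.
Qed.

Lemma added4_fwd_inv e : e \in added -> source_rep F e.2 /\ sigma e.2 = e.1.
Proof. by case/added4_inv => _; rewrite mem_Q_tgt => /and3P [s_rep _ /eqP]. Qed.

Definition answered := [set s in source_reps id F | (sigma s, s) \in added].

Lemma card_added4_answered : #|added| <= #|answered|.
Proof.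
apply: leq_trans (leq_imset_card (fun s => (sigma s, s)) answered).
apply/subset_leq_card/subsetP => e e_add; have [s_rep sigma_s] := added4_fwd_inv e_add.
apply/imsetP; exists e.2; last by rewrite sigma_s -surjective_pairing.
by rewrite !inE s_rep sigma_s -surjective_pairing.
Qed.

Section AllForward.
Hypothesis all_fwd : forall s, source_rep F s -> fwd id F s.

Lemma forward_target s : source_rep F s ->
  sigma s \in P_src id F s /\ 1 < #|S_set id F (sigma s)|.
Proof. by move=> s_rep; have := sel_in r s (all_fwd s_rep); rewrite inE => /andP. Qed.

Lemma forward_target_rep s : source_rep F s -> target_rep F (sigma s).
Proof.
by move=> /forward_target [+ _]; rewrite P_src_global inE => /andP [/andP []].
Qed.

Lemma mem_next_graph e : (e \in F') = (e \in F) || (e \in added).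
Proof.
rewrite /next_graph; suff -> : added3 id F = set0 by rewrite setU0 inE.
apply/setP => e'; rewrite inE; apply/negP => /added3_inv [s_rep s_fwd _].
by rewrite all_fwd in s_fwd.
Qed.

Lemma answered_gt0 : 0 < #|answered|.
Proof.
have := alpha_gt0 id_inj wc nsc; rewrite (alpha_reps id_inj) card_gt0.
case/set0Pn => s; rewrite inE => s_rep; have t_rep := forward_target_rep s_rep.
have sQ : s \in Q_tgt id sel F r (sigma s) by rewrite mem_Q_tgt s_rep all_fwd // eqxx.
rewrite card_gt0; apply/set0Pn.
have [bk|bk] := boolP (bk_cands id sel F r (sigma s) == set0).
  by exists s; rewrite !inE s_rep (mem_added4_Q t_rep bk sQ).
have e_add := mem_added4_sel t_rep bk; have [s'_rep sigma_s'] := added4_fwd_inv e_add.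
by exists (sel r (sigma s) (bk_cands id sel F r (sigma s))); rewrite !inE s'_rep /= sigma_s'.
Qed.

(* The only added edge that could enter the source SCC of s is (sigma s, s). *)
Lemma reach_unanswered s y : source_rep F s -> (sigma s, s) \notin added ->
  reach F' y s -> y \in sccIn F s.
Proof.
move=> /andP [s_src s_min] s_unans ys; apply: reach_closed_pred ys (scc_refl F s) => a b.
rewrite mem_next_graph => /orP [ab | ab] bC.
  apply: scc_reach_noin; first by case/andP: s_src.
  by case/sccP: bC => _ bs; apply: reach_trans (reach_edge ab) bs.
move: (added4_fwd_inv ab) => /= [/andP [_ b_min] sigma_b].
have bs : b = s by exact: (scc_rep_uniq id_inj b_min s_min bC).
by move: s_unans; rewrite -bs sigma_b ab.
Qed.

(* The other source representative a' in S_(sigma a) reaches a through the added edge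
   (sigma a, a), so it joins the source SCC of a and must be answered itself. *)
Lemma answered_partner a : a \in answered -> is_sourceIn F' a ->
  exists2 a', a' \in answered & (a' != a) && (sccIn F' a' == sccIn F' a).
Proof.
rewrite !inE => /andP [a_rep a_ans] a_src; have [_ S_big] := forward_target a_rep.
have : 0 < #|S_set id F (sigma a) :\ a|.
  by move: S_big; rewrite (cardsD1 a); case: (_ \in _); rewrite ?add1n ?add0n // => /ltnW.
case/card_gt0P => a'; rewrite in_setD1 S_set_global inE => /and3P [a'a a'_rep a'sigma].
have a'a_next : reach F' a' a.
  apply: reach_trans (reach_next a'sigma) (reach_edge _).
  by rewrite mem_next_graph a_ans orbT.
have a'C : a' \in sccIn F' a by apply: scc_reach_noin a'a_next; case/andP: a_src.
exists a'; last by rewrite a'a (scc_eq a'C) eqxx.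
rewrite !inE a'_rep; apply: contraT => a'_unans.
have /sccP [aa' _] := a'C; have aC := reach_unanswered a'_rep a'_unans aa'.
case/andP: a_rep => _ a_min; case/andP: a'_rep => _ a'_min.
by move: a'a; rewrite (scc_rep_uniq id_inj a_min a'_min aC) eqxx.
Qed.

(* Every source SCC of F' contains a source representative of F, and by
   [answered_partner] one containing an answered representative contains two of them. *)
Lemma alpha_next : 2 * alpha F' + #|answered| <= 2 * alpha F.
Proof.
set A := source_reps id F.
have ans_sub : answered \subset A by apply/subsetP => s; rewrite inE => /andP [].
have classes : [set sccIn F' x | x in [set x | is_sourceIn F' x]] \subset
    sccIn F' @: (A :\: answered) :|: sccIn F' @: [set s in answered | is_sourceIn F' s].
  apply/subsetP => C /imsetP [x]; rewrite inE => x_src ->.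
  have [s sA /andP [s_src /eqP <-]] := next_source_rep x_src.
  rewrite inE; case: (boolP (s \in answered)) => s_ans; apply/orP; [right | left];
    apply: imset_f; first by rewrite inE s_ans.
  by rewrite in_setD s_ans.
have alpha'_le := subset_leq_card classes; rewrite -/(alpha F') in alpha'_le.
have [union_le _] := leq_card_setU (sccIn F' @: (A :\: answered))
  (sccIn F' @: [set s in answered | is_sourceIn F' s]).
have unans_le := leq_imset_card (sccIn F') (A :\: answered).
have ans_le := card_imset_paired answered_partner.
have := subset_leq_card ans_sub.
rewrite (alpha_reps id_inj F) -/A cardsD (setIidPr ans_sub) in unans_le *; lia.
Qed.

Section SingleTargets.
Hypothesis single : forall s, source_rep F s -> #|P_src id F s| <= 1.

Lemma reach_single_target s0 y : source_rep F s0 -> reach F y (sigma s0).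
Proof.
move=> s0_rep; have t_rep := forward_target_rep s0_rep.
have : y \in [set y | reach F y (sigma s0)]; last by rewrite inE.
apply: (weakly_connected_closed wc (x := sigma s0)); first by rewrite inE reach_refl.
  move=> a b ab; rewrite !inE => a_t.
  have [s s_rep sa] := source_rep_above id wc nsc a.
  have [t t'_rep bt] := target_rep_below id wc nsc b.
  have tP : sigma s0 \in P_src id F s by rewrite P_src_global inE t_rep s_rep (reach_trans sa a_t).
  have t'P : t \in P_src id F s.
    by rewrite P_src_global inE t'_rep s_rep (reach_trans sa (reach_trans (reach_edge ab) bt)).
  by rewrite (card_le1_eqP (single s_rep) _ _ t'P tP).
by move=> a b ab; rewrite !inE; apply: reach_trans (reach_edge ab).
Qed.

(* Every source representative proposes to the same target t, which answers all of them
   because no P_s has two elements. *)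
Lemma single_targets_strongly_connected : strongly_connected F'.
Proof.
have := alpha_gt0 id_inj wc nsc; rewrite (alpha_reps id_inj) card_gt0.
case/set0Pn => s0; rewrite inE => s0_rep; set t := sigma s0.
have t_rep : target_rep F t := forward_target_rep s0_rep.
have sigma_t s : source_rep F s -> sigma s = t.
  move=> s_rep; have [tP _] := forward_target s_rep.
  have t'P : t \in P_src id F s by rewrite P_src_global inE t_rep s_rep reach_single_target.
  exact: (card_le1_eqP (single s_rep)).
have no_bk : bk_cands id sel F r t == set0.
  apply/eqP/setP => s; rewrite inE [s \in Q_tgt _ _ _ _ _]mem_Q_tgt in_set0.
  by case: (boolP (source_rep F s)) => //= s_rep; rewrite ltnNge (single s_rep) andbF.
move=> x y; have [s s_rep sy] := source_rep_above id wc nsc y.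
have sQ : s \in Q_tgt id sel F r t by rewrite mem_Q_tgt s_rep all_fwd // sigma_t // eqxx.
have ts : (t, s) \in F' by rewrite mem_next_graph (mem_added4_Q t_rep no_bk sQ) orbT.
apply: reach_trans (reach_next (reach_single_target x s0_rep)) _.
exact: reach_trans (reach_edge ts) (reach_next sy).
Qed.

End SingleTargets.

(* A source representative s with |P_s| > 1 proposes to sigma s, which then links to some
   ss with |P_ss| > 1; another target representative below ss thus merges with sigma s. *)
Lemma merged_target_reps : ~ strongly_connected F' ->
  exists t0 t2, [/\ target_rep F t0, target_rep F t2, t2 != t0 & reach F' t0 t2].
Proof.
move=> nsc'; have [s s_rep P_big] : exists2 s, source_rep F s & 1 < #|P_src id F s|.
  case: (boolP [exists s, source_rep F s && (1 < #|P_src id F s|)]).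
    by case/existsP => s /andP [s_rep P_big]; exists s.
  move/existsPn => none; case: nsc'; apply: single_targets_strongly_connected => s s_rep.
  by have := none s; rewrite s_rep /= -leqNgt.
set t0 := sigma s; have t0_rep := forward_target_rep s_rep.
have sQ : s \in Q_tgt id sel F r t0 by rewrite mem_Q_tgt s_rep all_fwd // eqxx.
have bk : bk_cands id sel F r t0 != set0 by apply/set0Pn; exists s; rewrite inE sQ P_big.
set ss := sel r t0 (bk_cands id sel F r t0).
have := sel_in r t0 bk; rewrite -/ss inE => /andP [_ ss_big].
have t0ss : (t0, ss) \in F' by rewrite mem_next_graph (mem_added4_sel t0_rep bk) orbT.
have : 0 < #|P_src id F ss :\ t0|.
  by move: ss_big; rewrite (cardsD1 t0); case: (_ \in _); rewrite ?add1n ?add0n // => /ltnW.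
case/card_gt0P => t2; rewrite in_setD1 P_src_global inE.
case/andP => t2t0 /andP [/andP [t2_rep _] sst2].
by exists t0, t2; split => //; apply: reach_trans (reach_edge t0ss) (reach_next sst2).
Qed.

Lemma beta_next : ~ strongly_connected F' -> beta F' < beta F.
Proof.
move=> nsc'; have [t0 [t2 [t0_rep t2_rep t2t0 t0t2]]] := merged_target_reps nsc'.
have classes : [set sccIn F' x | x in [set x | is_targetIn F' x]] \subset
    sccIn F' @: [set t in target_reps id F | is_targetIn F' t].
  apply/subsetP => C /imsetP [x]; rewrite inE => x_tgt ->.
  have [t tB /andP [t_tgt /eqP <-]] := next_target_rep x_tgt.
  by apply: imset_f; rewrite inE tB.
apply: leq_ltn_trans (subset_leq_card classes) _; rewrite (beta_reps id_inj F).
apply: (card_imset_lt (b := t0)); first by rewrite inE.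
have [t0_tgt|] := boolP (is_targetIn F' t0); [right | by left].
have t2C : t2 \in sccIn F' t0 by apply: scc_reach_noout t0t2; case/andP: t0_tgt.
by exists t2; rewrite ?inE // t2t0 (scc_eq t2C) eqxx.
Qed.

End AllForward.

Lemma round_progress : strongly_connected F' \/
  [/\ alpha F' < alpha F, beta F' < beta F & #|F'| + 2 * alpha F' <= #|F| + 2 * alpha F].
Proof.
case: (boolP [exists s, source_rep F s && ~~ fwd id F s]).
  by case/existsP => s /andP [s_rep s_fwd]; left; apply: unforwarded_strongly_connected s_fwd.
move/existsPn => none; have all_fwd s : source_rep F s -> fwd id F s.
  by move=> s_rep; have := none s; rewrite s_rep negbK.
case: (strongly_connectedP F') => [sc' | nsc']; [by left | right].
have F'E : F' = F :|: added by apply/setP => e; rewrite (mem_next_graph all_fwd) inE.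
have [F'_le _] := leq_card_setU F added; rewrite -F'E in F'_le.
have := alpha_next all_fwd; have := answered_gt0 all_fwd; have := card_added4_answered.
by split; [lia | apply: beta_next | lia].
Qed.

End OneRound.
End Round.

(** * Local computation *)

Section Costs.
Variable n : nat.
Implicit Types (F : {set 'I_n * 'I_n}) (u : 'I_n).

Lemma card_le_n (A : {set 'I_n}) : #|A| <= n.
Proof. by apply: leq_trans (max_card _) _; rewrite card_ord. Qed.

(* Each flooding step of u sends its fresh edges to at most n out-neighbours and receives
   the fresh edges of at most n in-neighbours; summed over the steps these are known sets. *)
Lemma p1cost_le F u : p1cost F u <= n.+2 + #|F| * n + n * #|F| + (#|F| + n).
Proof.
rewrite /p1cost !big_split /= big_const_ord iter_addn_0 mul1n -big_distrl /= exchange_big /=.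
rewrite -/(fresh F _ _) sum_card_fresh.
apply: leq_add; first apply: leq_add; first apply: leq_add.
- by rewrite ltnS stop_le.
- by rewrite leq_mul ?card_le_n ?subset_leq_card ?known_subset.
- apply: leq_trans (_ : \sum_(v in inN F u) #|F| <= _); last first.
    by rewrite sum_nat_const leq_mul2r card_le_n orbT.
  apply: leq_sum => v _; rewrite -/(fresh F _ _) sum_card_fresh.
  by rewrite subset_leq_card ?known_subset.
- by rewrite leq_add ?card_le_n ?subset_leq_card ?Kn_subset.
Qed.

Variables (id : 'I_n -> nat) (sel : nat -> 'I_n -> {set 'I_n} -> 'I_n).

Lemma round_cost_le F r u :
  round_cost id sel F r u <= 2 * n * #|F| + 2 * #|F| + n * n + 5 * n + 5.
Proof.
have p1 := p1cost_le F u.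
have p2 : p2cost id F u <= #|F| + n * n.
  by rewrite /p2cost leq_add ?leq_mul ?card_le_n ?subset_leq_card ?Kn_subset.
have p3 : p3cost id F u <= 1 + 2 * n by rewrite /p3cost leq_add2l leq_mul2l card_le_n orbT.
have p4 : p4cost id sel F r u <= 1 + n by rewrite /p4cost leq_add2l card_le_n.
by rewrite /round_cost; case: (tgt_rep id F u); case: (src_rep id F u); lia.
Qed.

End Costs.

Section Execution.
Variable n : nat.
Variable id : 'I_n -> nat.
Hypothesis id_inj : injective id.
Variable sel : nat -> 'I_n -> {set 'I_n} -> 'I_n.
Hypothesis sel_in : forall r u (A : {set 'I_n}), A != set0 -> sel r u A \in A.
Variable E : {set 'I_n * 'I_n}.
Hypothesis wc : weakly_connected E.
Hypothesis nsc : ~ strongly_connected E.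

Local Notation graph r := (graph_at id sel E r).
Local Notation m := (minn (alpha E) (beta E)).

Lemma graph_atS r : graph r.+1 = next_graph id sel (graph r) r.
Proof. by []. Qed.

Lemma weakly_connected_graph_at r : weakly_connected (graph r).
Proof. by elim: r => [|r IH] //; rewrite graph_atS; apply: weakly_connected_next. Qed.

Lemma graph_at_progress r : ~ strongly_connected (graph r) ->
  [/\ alpha (graph r) + r <= alpha E, beta (graph r) + r <= beta E &
      #|graph r| + 2 * alpha (graph r) <= #|E| + 2 * alpha E].
Proof.
elim: r => [|r IH] nsc_r; first by rewrite !addn0.
have nsc_r' : ~ strongly_connected (graph r).
  by move=> sc_r; apply: nsc_r; rewrite graph_atS; apply: strongly_connected_next.
have [alpha_r beta_r card_r] := IH nsc_r'.
have [sc_r|[alpha_lt beta_lt card_le]] :=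
  round_progress id_inj sel_in r (weakly_connected_graph_at r) nsc_r'.
  by case: nsc_r.
by rewrite graph_atS; split; lia.
Qed.

Lemma strongly_connected_graph_at_min : strongly_connected (graph m).
Proof.
case: (strongly_connectedP (graph m)) => // nsc_m.
have [alpha_m beta_m _] := graph_at_progress nsc_m.
have := alpha_gt0 id_inj (weakly_connected_graph_at m) nsc_m.
have := beta_gt0 id_inj (weakly_connected_graph_at m) nsc_m.
lia.
Qed.

Variable u : 'I_n.

Lemma exited_after_min r : m < r -> exited_before id sel E r u.
Proof.
move=> mr; apply/existsP; exists (Ordinal mr).
by rewrite isolated_ag_global; apply: strongly_connected_isolated strongly_connected_graph_at_min.
Qed.

(* If graph r is already strongly connected, graph (r - 1) was not, since u is still
   active, and the last round added at most 2n edges. *)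
Lemma card_graph_at r : ~~ exited_before id sel E r u ->
  #|graph r| <= #|E| + 2 * alpha E + 2 * n.
Proof.
move=> alive; case: (strongly_connectedP (graph r)) => [sc_r | nsc_r]; last first.
  by have [_ _] := graph_at_progress nsc_r; lia.
case: r alive sc_r => [|r] alive sc_r; first by case: nsc.
case: (strongly_connectedP (graph r)) => [sc_r' | nsc_r'].
  case/negP: alive; apply/existsP; exists (Ordinal (ltnSn r)).
  by rewrite isolated_ag_global; apply: strongly_connected_isolated.
have [_ _] := graph_at_progress nsc_r'.
have := card_next_graph id sel_in (graph r) r; rewrite -graph_atS; lia.
Qed.

Lemma round_cost_alive r : ~~ exited_before id sel E r u ->
  round_cost id sel (graph r) r u <= 53 * (n * #|E|).
Proof.
move=> alive; have := round_cost_le id sel (graph r) r u.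
have := card_graph_at alive; have := alpha_le id_inj E.
have := n_le_2card wc nsc; have := n_gt0 nsc.
nia.
Qed.

Lemma total_cost_le N : total_cost id sel E N u <= minn N m.+1 * (53 * (n * #|E|)).
Proof.
rewrite /total_cost; elim: N => [|N IH]; first by rewrite big_ord0.
rewrite big_ord_recr /=; case: (boolP (exited_before id sel E N u)) => [_ | alive].
  by rewrite addn0 (leq_trans IH) // leq_mul //; lia.
have N_le : N <= m by rewrite leqNgt; apply: contra alive; apply: exited_after_min.
have -> : minn N.+1 m.+1 = (minn N m.+1).+1 by lia.
by rewrite mulSn addnC leq_add ?round_cost_alive.
Qed.

End Execution.

Theorem theorem2 :
  exists C : nat,
  forall (n : nat) (id : 'I_n -> nat) (E : {set 'I_n * 'I_n})
         (sel : nat -> 'I_n -> {set 'I_n} -> 'I_n),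
    injective id ->
    loopless E ->
    weakly_connected E ->
    ~ strongly_connected E ->
    (forall r u (A : {set 'I_n}), A != set0 -> sel r u A \in A) ->
    forall (u : 'I_n) (N : nat),
      total_cost id sel E N u <= C * (n * #|E| * minn (alpha E) (beta E)).
Proof.
exists 106 => n id E sel id_inj _ wc nsc sel_in u N.
apply: leq_trans (total_cost_le id_inj sel_in wc nsc u N) _.
have m_gt0 : 0 < minn (alpha E) (beta E).
  by rewrite leq_min (alpha_gt0 id_inj) ?(beta_gt0 id_inj).
apply: leq_trans (leq_mul (geq_minr _ _) (leqnn _)) _.
set m := minn _ _ in m_gt0 *; set ne := n * #|E|; nia.
Qed.
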